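(* Let $M$ be a finite abelian group of exponent greater than $2$ and let $f$ be a half-automorphism of $L_M$. Then for every $x\in M$ there is a unique $f''(x)\in M$ with $f(1,x)=(1,f''(x))$, and the map $f'':M\to M$ is an automorphism of $M$.
   Context: Let $K=\{1,a,b,c\}$ be the Klein four-group. Set $L_M=K\times M$ with the operation $(A,x)*(B,y)=(AB,xy)$ if $B=1$, and $(A,x)*(B,y)=(AB,x^{-1}y)$ if $B\neq 1$. A half-automorphism of a loop $L$ is a bijection $f:L\to L$ such that $f(XY)\in\{f(X)f(Y),f(Y)f(X)\}$ for all $X,Y\in L$. *)

From mathcomp Require Import all_boot all_fingroup all_solvable.
Set Implicit Arguments.
Unset Strict Implicit.
Unset Printing Implicit Defensive.

Inductive klein := K1 | Ka | Kb | Kc.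

Definition kmul (x y : klein) : klein :=
  match x, y with
  | K1, z | z, K1 => z
  | Ka, Ka | Kb, Kb | Kc, Kc => K1
  | Ka, Kb | Kb, Ka => Kc
  | Ka, Kc | Kc, Ka => Kb
  | Kb, Kc | Kc, Kb => Ka
  end.

Definition LM_mul (gT : finGroupType) (X Y : klein * gT) : klein * gT :=
  match Y.1 with
  | K1 => (kmul X.1 Y.1, (X.2 * Y.2)%g)
  | _ => (kmul X.1 Y.1, ((X.2)^-1 * Y.2)%g)
  end.

Definition half_automorphism (gT : finGroupType) (f : klein * gT -> klein * gT) :=
  bijective f /\
  forall X Y, f (LM_mul X Y) = LM_mul (f X) (f Y) \/
              f (LM_mul X Y) = LM_mul (f Y) (f X).

Definition group_automorphism (gT : finGroupType) (g : gT -> gT) :=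
  bijective g /\ {morph g : x y / (x * y)%g}.

From mathcomp Require Import all_boot all_fingroup all_solvable.

(* Squaring commutes with any half-automorphism f, and an element (A, z) with
   A <> 1 squares to the identity (1, 1) of L_M.  Hence f fixes (1, 1), and if
   f moved (1, x) out of 1 x M, injectivity would force x^2 = 1.  When M is
   abelian of exponent > 2 there is u with u^2 <> 1; if x^2 = 1 then
   (ux)^2 <> 1, and the first component of f(1, ux), a product of f(1, u) and
   f(1, x) in some order, is that of f(1, x).  So f maps 1 x M to itself, and
   the induced map on M is a bijective half-homomorphism of an abelian group,
   i.e. an automorphism. *)

Set Implicit Arguments.
Unset Strict Implicit.
Unset Printing Implicit Defensive.

Local Open Scope group_scope.

Lemma LM_mul_fst (gT : finGroupType) (X Y : klein * gT) :
  (LM_mul X Y).1 = kmul X.1 Y.1.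
Proof. by rewrite /LM_mul; case: Y.1. Qed.

Lemma LM_mul11 (gT : finGroupType) (x y : gT) :
  LM_mul (K1, x) (K1, y) = (K1, x * y).
Proof. by []. Qed.

Lemma LM_mul_sqr_neq1 (gT : finGroupType) (A : klein) (z : gT) :
  A <> K1 -> LM_mul (A, z) (A, z) = (K1, 1).
Proof. by case: A => // _; rewrite /LM_mul /= mulVg. Qed.

Lemma exists_sqr_neq1 (gT : finGroupType) :
  2 < exponent [set: gT] -> exists u : gT, u * u != 1.
Proof.
move=> exp_gt2; apply/existsP; rewrite -negb_forall; apply/negP => /forallP sqr1.
have : exponent [set: gT] %| 2.
  by apply/exponentP => x _; rewrite expgS expg1; apply/eqP/sqr1.
by move/(dvdn_leq (isT : 0 < 2)); rewrite leqNgt exp_gt2.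
Qed.

Section HalfAutomorphism.

Variables (gT : finGroupType) (f : klein * gT -> klein * gT).
Hypothesis f_half : half_automorphism f.

Let f_inj : injective f := bij_inj f_half.1.

Lemma half_aut_sqr X : f (LM_mul X X) = LM_mul (f X) (f X).
Proof. by case: (f_half.2 X X). Qed.

Lemma half_aut_id : f (K1, 1) = (K1, 1).
Proof.
have := half_aut_sqr (K1, 1); rewrite LM_mul11 mulg1.
case: (f (K1, 1)) => [[] z]; try by rewrite LM_mul_sqr_neq1.
by rewrite LM_mul11 => -[] /esym /(canRL (mulKg z)); rewrite mulVg => ->.
Qed.

Lemma half_aut_fst_K1 x : x * x != 1 -> (f (K1, x)).1 = K1.
Proof.
move=> x2_neq1; case fx: (f (K1, x)) => [A z] /=.
case: A fx => // fx; have := half_aut_sqr (K1, x);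
  rewrite LM_mul11 fx LM_mul_sqr_neq1 // -half_aut_id => /f_inj [x2];
  by rewrite x2 eqxx in x2_neq1.
Qed.

Hypothesis gT_abelian : abelian [set: gT].
Hypothesis exponent_gt2 : 2 < exponent [set: gT].

Let mulgC (x y : gT) : x * y = y * x.
Proof. by apply: (centsP gT_abelian); rewrite inE. Qed.

Lemma half_aut_fst_K1_abelian x : (f (K1, x)).1 = K1.
Proof.
have [u u2_neq1] := exists_sqr_neq1 exponent_gt2.
have [x2|] := eqVneq (x * x) 1; last exact: half_aut_fst_K1.
have ux2_neq1 : u * x * (u * x) != 1.
  by rewrite mulgA -(mulgA u x u) (mulgC x u) mulgA -mulgA x2 mulg1.
have fu1 := half_aut_fst_K1 u2_neq1.
have := half_aut_fst_K1 ux2_neq1; rewrite -LM_mul11.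
by case: (f_half.2 (K1, u) (K1, x)) => ->; rewrite LM_mul_fst fu1;
  case: (f (K1, x)).1.
Qed.

Definition half_aut_restr (x : gT) : gT := (f (K1, x)).2.

Lemma half_aut_restrE x : f (K1, x) = (K1, half_aut_restr x).
Proof.
by have := half_aut_fst_K1_abelian x; rewrite /half_aut_restr; case: (f _) => A z /= ->.
Qed.

Lemma half_aut_restr_inj : injective half_aut_restr.
Proof.
by move=> x y eq_xy; have /f_inj[] : f (K1, x) = f (K1, y) by rewrite !half_aut_restrE eq_xy.
Qed.

Lemma half_aut_restrM : {morph half_aut_restr : x y / x * y}.
Proof.
move=> x y; have := f_half.2 (K1, x) (K1, y).
by rewrite LM_mul11 !half_aut_restrE !LM_mul11 => -[] [->]; rewrite // mulgC.
Qed.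

Lemma half_aut_restr_aut : group_automorphism half_aut_restr.
Proof. by split; [exact: injF_bij half_aut_restr_inj | exact: half_aut_restrM]. Qed.

End HalfAutomorphism.

Theorem proposition4p9 (gT : finGroupType)
  (HM : abelian [set: gT]) (Hexp : 2 < exponent [set: gT])
  (f : klein * gT -> klein * gT) (Hf : half_automorphism f) :
  (forall x : gT, exists! y : gT, f (K1, x) = (K1, y)) /\
  exists f'' : gT -> gT,
    (forall x : gT, f (K1, x) = (K1, f'' x)) /\ group_automorphism f''.
Proof.
have restrE := half_aut_restrE Hf HM Hexp.
split.
  move=> x; exists (half_aut_restr f x); split; first exact: restrE.
  by move=> y; rewrite restrE => -[].
exists (half_aut_restr f); split; first exact: restrE.
exact: half_aut_restr_aut.
Qed.
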